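(* Let $A$ be an invertible integral $g\times g$ matrix such that \[A^t=\begin{pmatrix}\mathrm{Id}_{g-k} & Y\\ 0 & Z\end{pmatrix}\] where $Z$ is an integral $k\times k$ matrix with $Z-\mathrm{Id}$ injective and $Y$ is an integral $(g-k)\times k$ matrix. Then there is an integral $g\times g$ matrix $B$ such that \[\operatorname{im}(A-\mathrm{Id})+B\big(\ker((A^t)^{-1}-\mathrm{Id})\big)=\mathbb{Q}^g\] and $B^t(A^t)^{-1}=A^{-1}B$.
   Context: Here $A$, $B$ act on $\mathbb{Q}^g$ (column vectors); $\operatorname{im}$ and $\ker$ are taken over $\mathbb{Q}$. In the application, $\mathbb{Q}^g$ is the Lagrangian $L=\ker(H_1(\partial V_g;\mathbb{Q})\to H_1(V_g;\mathbb{Q}))$ with basis given by meridian classes. *)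

From HB Require Import structures.
From mathcomp Require Import all_boot all_order all_algebra.
Set Implicit Arguments. Unset Strict Implicit. Unset Printing Implicit Defensive.
Import Order.TTheory GRing.Theory Num.Theory.
Local Open Scope ring_scope.

Definition ratmx (m n : nat) (M : 'M[int]_(m, n)) : 'M[rat]_(m, n) :=
  map_mx (fun z : int => z%:~R) M.

From HB Require Import structures.
From mathcomp Require Import all_boot all_order all_algebra.
Import Order.TTheory GRing.Theory Num.Theory.
Local Open Scope ring_scope.

(* Write g = m + k.  Over Q the hypothesis says
     A = [[1, 0], [y^T, z^T]]     with y = Y, z = Z as rational matrices,
   and we take the integral matrix
     B = [[1, 0], [Y^T, 0]].
   - Every vector (w1, 0) is fixed by A^T, hence lies in ker((A^T)^-1 - 1),
     and B maps it to (w1, y^T w1).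
   - Since z - 1 is injective, z^T - 1 is invertible, so the image of
     A - 1 = [[0, 0], [y^T, z^T - 1]] is exactly {0} x Q^k; together with
     the vectors (w1, y^T w1) it spans Q^g.
   - A B^T = [[1, y], [y^T, y^T y]] = B A^T, which for invertible A is the
     required identity B^T (A^T)^-1 = A^-1 B. *)

Lemma injective_unitmx (F : fieldType) (n : nat) (M : 'M[F]_n) :
  (forall v : 'cV[F]_n, M *m v = 0 -> v = 0) -> M \in unitmx.
Proof.
move=> injM; rewrite -unitmx_tr unitmxE unitfE; apply/negP => /det0P [v v_neq0 vM].
have : M *m v^T = 0 by rewrite -[M]trmxK -trmx_mul vM trmx0.
by move/injM/(congr1 trmx); rewrite trmxK trmx0; apply/eqP.
Qed.

Lemma fixed_invmx (F : fieldType) (n : nat) (M : 'M[F]_n) (v : 'cV[F]_n) :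
  M \in unitmx -> M *m v = v -> (invmx M - 1%:M) *m v = 0.
Proof. by move=> uM Mv; rewrite mulmxBl mul1mx -{1}Mv mulKmx // subrr. Qed.

Lemma twisted_symmetry (F : fieldType) (n : nat) (M N : 'M[F]_n) :
  M \in unitmx -> M *m N^T = N *m M^T ->
  N^T *m invmx M^T = invmx M *m N.
Proof.
move=> uM sym; have uMt : M^T \in unitmx by rewrite unitmx_tr.
by rewrite -[N^T](mulKmx uM) sym -!mulmxA mulmxV // mulmx1.
Qed.

Section BlockComputations.

Variables (F : fieldType) (m k : nat) (y : 'M[F]_(m, k)) (z : 'M[F]_k).

(* The shape of A over Q, and the chosen partner matrix B. *)
Definition lower_block : 'M[F]_(m + k) := block_mx 1%:M 0 y^T z^T.
Definition partner_mx : 'M[F]_(m + k) := block_mx 1%:M 0 y^T 0.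

Lemma lower_block_tr_fixed (w1 : 'cV[F]_m) :
  lower_block^T *m col_mx w1 0 = col_mx w1 0.
Proof.
rewrite /lower_block tr_block_mx trmxK trmx0 trmx1 mul_block_col.
by rewrite mul1mx !mulmx0 mul0mx !addr0.
Qed.

Lemma lower_block_spanning :
  (forall v : 'cV[F]_k, (z - 1%:M) *m v = 0 -> v = 0) ->
  forall w : 'cV[F]_(m + k),
    w = (lower_block - 1%:M) *m col_mx 0
          (invmx (z - 1%:M)^T *m (dsubmx w - y^T *m usubmx w))
        + partner_mx *m col_mx (usubmx w) 0.
Proof.
move=> injz w; set c := invmx _ *m _.
have uz : (z - 1%:M)^T \in unitmx by rewrite unitmx_tr injective_unitmx.
have zc : z^T *m c - c = dsubmx w - y^T *m usubmx w.
  by rewrite -{2}[c]mul1mx -mulmxBl -trmx1 -linearB /= mulKVmx.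
rewrite /lower_block /partner_mx mulmxBl mul1mx !mul_block_col.
rewrite opp_col_mx !add_col_mx !mul1mx !mulmx0 !mul0mx.
by rewrite subr0 !addr0 !add0r zc subrK vsubmxK.
Qed.

Lemma lower_block_partner_sym :
  lower_block *m partner_mx^T = partner_mx *m lower_block^T.
Proof.
rewrite /lower_block /partner_mx !tr_block_mx !mulmx_block !trmxK !trmx0 !trmx1.
by rewrite !mulmx1 !mul0mx !mulmx0 !addr0 !mul1mx.
Qed.

End BlockComputations.

Arguments lower_block {F m k} y z.
Arguments partner_mx {F m k} y.

Lemma ratmx_block (m k : nat) (a : 'M[int]_m) (b : 'M[int]_(m, k))
    (c : 'M[int]_(k, m)) (d : 'M[int]_k) :
  ratmx (block_mx a b c d) = block_mx (ratmx a) (ratmx b) (ratmx c) (ratmx d).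
Proof. by rewrite /ratmx map_block_mx. Qed.

Lemma ratmx_tr (m n : nat) (M : 'M[int]_(m, n)) : ratmx M^T = (ratmx M)^T.
Proof. by rewrite /ratmx map_trmx. Qed.

Lemma ratmx1 (n : nat) : ratmx (1%:M : 'M[int]_n) = 1%:M.
Proof. by rewrite /ratmx map_mx1. Qed.

Lemma ratmx0 (m n : nat) : ratmx (0 : 'M[int]_(m, n)) = 0.
Proof. by rewrite /ratmx map_mx0. Qed.

Lemma ratmx_unit (n : nat) (M : 'M[int]_n) :
  M \in unitmx -> ratmx M \in unitmx.
Proof. by rewrite !unitmxE /ratmx det_map_mx; apply: rmorph_unit. Qed.

(* g = m + k, with m = g - k. Vectors are column vectors in Q^g. *)
Theorem mainTheorem5 (m k : nat) (A : 'M[int]_(m + k))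
    (Y : 'M[int]_(m, k)) (Z : 'M[int]_k) :
  A \in unitmx ->
  A^T = block_mx 1%:M Y 0 Z ->
  (forall v : 'cV[rat]_k, (ratmx Z - 1%:M) *m v = 0 -> v = 0) ->
  exists B : 'M[int]_(m + k),
    (forall w : 'cV[rat]_(m + k),
       exists (u v : 'cV[rat]_(m + k)),
         (invmx (ratmx A)^T - 1%:M) *m v = 0 /\
         w = (ratmx A - 1%:M) *m u + ratmx B *m v) /\
    (ratmx B)^T *m invmx (ratmx A)^T = invmx (ratmx A) *m ratmx B.
Proof.
move=> uA At injZ.
have A_rat : ratmx A = lower_block (ratmx Y) (ratmx Z).
  rewrite -[A]trmxK At tr_block_mx ratmx_block !ratmx_tr.
  by rewrite ratmx1 ratmx0 trmx1 trmx0.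
exists (block_mx 1%:M 0 Y^T 0).
have B_rat : ratmx (block_mx 1%:M 0 Y^T 0) = partner_mx (ratmx Y).
  by rewrite ratmx_block ratmx_tr ratmx1 !ratmx0.
have uAQ : ratmx A \in unitmx by exact: ratmx_unit.
rewrite B_rat; split.
- move=> w; eexists; exists (col_mx (usubmx w) 0); split.
  + rewrite fixed_invmx ?unitmx_tr // A_rat.
    exact: lower_block_tr_fixed.
  + by rewrite A_rat; apply: lower_block_spanning.
- apply: twisted_symmetry => //.
  by rewrite A_rat; apply: lower_block_partner_sym.
Qed.
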